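(* Let $[X,d,m]$ be a metric random walk space with finite invariant measure $\nu$. Then $\Delta_m$ is ergodic if and only if $[X,d,m]$ (with $\nu$) is $m$-connected.
   Context: A metric random walk space $[X,d,m]$ is a Polish metric space $(X,d)$ with a family $m=(m_x)_{x\in X}$ of Borel probability measures, $x\mapsto m_x(A)$ Borel measurable, each with finite first moment. A Radon measure $\nu$ is invariant if $\nu(A)=\int_X m_x(A)d\nu(x)$ for all $\nu$-measurable $A$. Iterates $m_x^{*1}=m_x$, $m_x^{*n}(A)=\int_X m_z(A)dm_x^{*(n-1)}(z)$; $N^m_D=\{x:m_x^{*n}(D)=0\ \forall n\in\mathbb N\}$. The space is $m$-connected if $\nu(N^m_D)=0$ for every $\nu$-measurable $D$ with $0<\nu(D)<\infty$. The Laplacian is $\Delta_m f(x)=\int_X(f(y)-f(x))dm_x(y)$ with domain $L^1(X,\nu)\cap L^2(X,\nu)$; $\Delta_m$ is ergodic if every $u$ in its domain with $\Delta_m u=0$ $\nu$-a.e. is $\nu$-a.e. constant. *)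

From HB Require Import structures.
From mathcomp Require Import all_boot all_order all_algebra.
From mathcomp Require Import all_classical all_reals all_analysis.
Set Implicit Arguments.
Unset Strict Implicit.
Unset Printing Implicit Defensive.
Import Order.TTheory GRing.Theory Num.Theory.
Local Open Scope classical_set_scope.
Local Open Scope ring_scope.

Section metric.
Context {R : realType} {X : Type}.

Definition is_metric (dist : X -> X -> R) : Prop :=
  [/\ forall x y, 0 <= dist x y,
      forall x y, dist x y = 0 <-> x = y,
      forall x y, dist x y = dist y x
    & forall x y z, dist x z <= dist x y + dist y z].

Definition metric_open (dist : X -> X -> R) (U : set X) : Prop :=
  forall x, U x -> exists2 r : R, 0 < r & [set y | dist x y < r] `<=` U.

Definition metric_complete (dist : X -> X -> R) : Prop :=
  forall u : nat -> X,
    (forall e : R, 0 < e -> exists N, forall n k, (N <= n)%N -> (N <= k)%N ->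
        dist (u n) (u k) < e) ->
    exists l, forall e : R, 0 < e -> exists N, forall n, (N <= n)%N ->
        dist (u n) l < e.

Definition metric_separable (dist : X -> X -> R) : Prop :=
  exists S : set X, countable S /\
    forall x (e : R), 0 < e -> exists2 s, S s & dist x s < e.

Definition polish_metric (dist : X -> X -> R) : Prop :=
  [/\ is_metric dist, metric_complete dist & metric_separable dist].
End metric.

Section step.
Context d (X : measurableType d) (R : realType).
Variable m : R.-ker X ~> X.
Variable mu : {measure set X -> \bar R}.

Definition kstep (A : set X) : \bar R := (\int[mu]_z m z A)%E.

Let kstep0 : kstep set0 = 0%E.
Proof.
by rewrite /kstep (eq_integral (cst 0%E)) ?integral0// => y _; rewrite measure0.
Qed.

Let kstep_ge0 A : (0 <= kstep A)%E. Proof. exact: integral_ge0. Qed.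

Let kstep_sigma_additive : semi_sigma_additive kstep.
Proof.
move=> U mU tU mUU; rewrite [X in _ --> X](_ : _ =
  (\int[mu]_y (\sum_(n <oo) m y (U n)))%E); last first.
  apply: eq_integral => V _.
  by apply/esym/cvg_lim => //; exact/measure_semi_sigma_additive.
apply/cvg_closeP; split.
  by apply: is_cvg_nneseries => n _ _; exact: integral_ge0.
rewrite closeE// integral_nneseries// => n.
exact: measurable_kernel.
Qed.

HB.instance Definition _ := isMeasure.Build _ _ R
  kstep kstep0 kstep_ge0 kstep_sigma_additive.

Definition mstep : {measure set X -> \bar R} := kstep.
End step.

Section iterates.
Context d (X : measurableType d) (R : realType).
Variable m : R.-ker X ~> X.

(* miter n x = m_x^{*(n+1)} : miter 0 x = m_x,
   miter (n+1) x (A) = \int m_z(A) d(miter n x)(z) *)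
Fixpoint miter (n : nat) (x : X) : {measure set X -> \bar R} :=
  match n with
  | 0 => m x
  | n'.+1 => mstep m (miter n' x)
  end.

(* m_x^{*n} for n >= 1 *)
Definition mconv (n : nat) (x : X) : {measure set X -> \bar R} := miter n.-1 x.

Definition NmD (D : set X) : set X :=
  [set x | forall n : nat, (0 < n)%N -> mconv n x D = 0%E].

Definition m_connected (nu : {measure set X -> \bar R}) : Prop :=
  forall D : set X, measurable D -> (0 < nu D)%E -> (nu D < +oo)%E ->
    nu (NmD D) = 0%E.

Definition laplacian (f : X -> R) (x : X) : \bar R :=
  (\int[m x]_y ((f y - f x)%:E))%E.

(** domain L^1(X,nu) /\ L^2(X,nu) (representatives) *)
Definition in_L1L2 (nu : {measure set X -> \bar R}) (u : X -> R) : Prop :=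
  nu.-integrable setT (EFin \o u) /\
  (\int[nu]_x ((u x) ^+ 2)%:E < +oo)%E.

Definition ergodic_laplacian (nu : {measure set X -> \bar R}) : Prop :=
  forall u : X -> R, in_L1L2 nu u ->
    {ae nu, forall x, laplacian u x = 0%E} ->
    exists c : R, {ae nu, forall x, u x = c}.
End iterates.

Definition invariant_measure d (X : measurableType d) (R : realType)
  (m : R.-ker X ~> X) (nu : {measure set X -> \bar R}) : Prop :=
  forall A : set X, measurable A -> nu A = (\int[nu]_x m x A)%E.

(** [X, dist, m] is a metric random walk space:
    (X, dist) Polish, the sigma-algebra of X is the Borel one, each m_x a
    Borel probability measure (m is a probability kernel, so x |-> m_x(A)
    is measurable), each m_x with finite first moment. *)
Definition metric_random_walk_space d (X : measurableType d) (R : realType)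
  (dist : X -> X -> R) (m : R.-pker X ~> X) : Prop :=
  [/\ polish_metric dist,
      (@measurable d X) = <<s metric_open dist >>
    & forall x, (\int[m x]_y (dist x y)%:E < +oo)%E].

(* Ergodic => m-connected.  Let 0 < nu(D) < oo and N = N^m_D.  Then N is
   absorbing: m_x(X \ N) = 0 for x in N.  Since nu is finite and invariant,
   nu(N) = \int m_x(N) dnu forces m_x(N) = 0 for nu-a.e. x outside N, so the
   indicator of N is harmonic, hence a.e. constant by ergodicity.  If N had
   full measure we would get nu(D) = \int m_x(D) dnu = 0; so nu(N) = 0.

   m-connected => ergodic.  If Delta_m u = 0, Jensen gives
   (u - c)^+ <= \int (u - c)^+ dm_x, and invariance gives both sides the same
   nu-integral, so they agree a.e.  Hence m_x(u > c) = 0 for a.e. x with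
   u(x) <= c, which puts a.e. point of {u <= c} in N^m_{u > c}.
   m-connectedness then yields nu(u > c) = 0 or nu(u <= c) = 0 for every c,
   so u is a.e. equal to its essential supremum. *)

From HB Require Import structures.
From mathcomp Require Import all_boot all_order all_algebra.
From mathcomp Require Import all_classical all_reals all_analysis.
From mathcomp Require Import measurable_realfun ess_sup_inf.
Set Implicit Arguments.
Unset Strict Implicit.
Unset Printing Implicit Defensive.
Import Order.TTheory GRing.Theory Num.Theory.
Local Open Scope classical_set_scope.
Local Open Scope ring_scope.
Local Open Scope ereal_scope.

Section mstep_integral.
Context d (X : measurableType d) (R : realType).
Variables (m : R.-ker X ~> X) (mu : {measure set X -> \bar R}).

Import HBNNSimple.

Let integral_mstep_nnsfun (h : {nnsfun X >-> R}) :
  \int[mstep m mu]_x (h x)%:E = \int[mu]_y \int[m y]_x (h x)%:E.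
Proof.
under [RHS]eq_integral do rewrite integralT_nnsfun sintegralE.
rewrite integralT_nnsfun sintegralE ge0_integral_fsum//; last 2 first.
- by move=> r; apply: measurable_funeM; exact: measurable_kernel.
- by move=> r y _; exact: nnsfun_mulemu_ge0.
apply: eq_fsbigr => _ /[1!inE] -[x _ <-].
by rewrite ge0_integralZl ?lee_fin//; exact/measurable_kernel/measurable_funPTI.
Qed.

Lemma integral_mstep (f : X -> \bar R) :
  (forall x, 0 <= f x) -> measurable_fun [set: X] f ->
  \int[mstep m mu]_x f x = \int[mu]_y \int[m y]_x f x.
Proof.
move=> f0 mf; pose g := nnsfun_approx measurableT mf.
have mg n : measurable_fun [set: X] (fun x => (g n x)%:E).
  exact/measurable_EFinP.
have g0 n x : 0 <= (g n x)%:E by rewrite lee_fin.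
have nd_g x : {homo (fun n => (g n x)%:E) : n k / (n <= k)%N >-> n <= k}.
  by move=> n k nk; rewrite lee_fin; exact/lefP/nd_nnsfun_approx.
have integral_lim (nu : {measure set X -> \bar R}) :
    \int[nu]_x f x = limn (fun n => \int[nu]_x (g n x)%:E).
  rewrite -monotone_convergence//; apply: eq_integral => x _.
  by apply/esym/cvg_lim => //; exact: cvg_nnsfun_approx.
rewrite integral_lim; under eq_fun do rewrite integral_mstep_nnsfun.
rewrite -monotone_convergence//; last 3 first.
- move=> n; apply: (measurable_fun_integral_kernel (measurable_kernel m)).
  + exact: g0.
  + exact: mg.
- by move=> n y _; exact: integral_ge0.
- by move=> y _ n k nk; apply: ge0_le_integral => // x _; exact: nd_g.
by apply: eq_integral => y _; rewrite integral_lim.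
Qed.

End mstep_integral.

Section iterates.
Context d (X : measurableType d) (R : realType) (m : R.-ker X ~> X).

Lemma measurable_miter n A : measurable A ->
  measurable_fun [set: X] (fun x => miter m n x A).
Proof.
elim: n A => [|n IHn] A mA; first exact: measurable_kernel.
by apply: (measurable_fun_integral_kernel IHn) => //; exact: measurable_kernel.
Qed.

Lemma integral_miterS n x (f : X -> \bar R) :
  (forall y, 0 <= f y) -> measurable_fun [set: X] f ->
  \int[miter m n.+1 x]_y f y = \int[m x]_z \int[miter m n z]_y f y.
Proof.
elim: n x f => [|n IHn] x f f0 mf; first exact: integral_mstep.
have mintf : measurable_fun [set: X] (fun z => \int[m z]_y f y).
  exact: (measurable_fun_integral_kernel (measurable_kernel m)).
rewrite [LHS]integral_mstep// IHn//; last by move=> z; exact: integral_ge0.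
by apply: eq_integral => z _; rewrite [in RHS]integral_mstep.
Qed.

Lemma miterS n x A : measurable A ->
  miter m n.+1 x A = \int[m x]_z miter m n z A.
Proof.
move=> mA; have measure_indic (mu : {measure set X -> \bar R}) :
    mu A = \int[mu]_y (\1_A y)%:E by rewrite integral_indic// setIT.
rewrite (measure_indic (miter m n.+1 x)) integral_miterS//.
- by apply: eq_integral => z _; rewrite -measure_indic.
- exact/measurable_EFinP/measurable_indic.
Qed.

Lemma NmDE D x : NmD m D x <-> forall n, miter m n x D = 0.
Proof. by split => [Nx n|Nx n _]; [exact: (Nx n.+1)|exact: Nx]. Qed.

Lemma measurable_NmD D : measurable D -> measurable (NmD m D).
Proof.
move=> mD; rewrite (_ : NmD m D = \bigcap_n ((miter m n)^~ D @^-1` [set 0])).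
  apply: bigcapT_measurable => n; rewrite -[X in measurable X]setTI.
  exact: measurable_miter.
apply/seteqP; split => x; last by move=> Nx; apply/NmDE => n; exact: Nx.
by move/NmDE => Nx n _; exact: Nx.
Qed.

Lemma invariant_integral (nu : {measure set X -> \bar R}) (f : X -> \bar R) :
  invariant_measure m nu -> (forall x, 0 <= f x) ->
  measurable_fun [set: X] f ->
  \int[nu]_x f x = \int[nu]_x \int[m x]_y f y.
Proof.
move=> nu_inv f0 mf; rewrite -integral_mstep//.
by apply: eq_measure_integral => A mA _; rewrite nu_inv.
Qed.

End iterates.

Section ae_integral.
Context d (X : measurableType d) (R : realType)
  (mu : {measure set X -> \bar R}).

Lemma aeNP A : measurable A -> {ae mu, forall x, ~ A x} <-> mu A = 0.
Proof.
by move=> mA; rewrite -(negligibleP mu mA) -[X in mu.-negligible X]setCK.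
Qed.

Lemma ge0_integral_eq0_ae (f : X -> \bar R) :
  (forall x, 0 <= f x) -> measurable_fun [set: X] f ->
  \int[mu]_x f x = 0 -> {ae mu, forall x, f x = 0}.
Proof.
move=> f0 mf intf0; have : \int[mu]_x `|f x| = 0.
  by rewrite -intf0; apply: eq_integral => x _; rewrite gee0_abs.
by move/(ae_eq_integral_abs mu measurableT mf); apply: filterS => x /(_ I).
Qed.

Lemma ae_eq0_integral (f : X -> \bar R) : measurable_fun [set: X] f ->
  {ae mu, forall x, f x = 0} -> \int[mu]_x f x = 0.
Proof.
move=> mf f0; rewrite (ae_eq_integral (cst 0)) ?integral0//.
by apply: filterS f0 => x ->.
Qed.

Lemma ae_eq_of_le_integral (f : X -> R) (g : X -> \bar R) :
  (forall x, 0 <= f x)%R -> measurable_fun [set: X] f ->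
  measurable_fun [set: X] g -> \int[mu]_x (f x)%:E < +oo ->
  {ae mu, forall x, (f x)%:E <= g x} ->
  \int[mu]_x g x = \int[mu]_x (f x)%:E -> {ae mu, forall x, g x = (f x)%:E}.
Proof.
move=> f0 mf mg intf_lty fg intg; pose h x := maxe (g x - (f x)%:E) 0.
have h0 x : 0 <= h x by rewrite le_max lexx orbT.
have mEf : measurable_fun [set: X] (fun x => (f x)%:E).
  exact/measurable_EFinP.
have mh : measurable_fun [set: X] h.
  by apply: measurable_maxe => //; exact: emeasurable_funB.
have ghf : {ae mu, forall x, g x = h x + (f x)%:E}.
  by apply: filterS fg => x fgx; rewrite /h max_l ?subeK// sube_ge0.
have /ge0_integral_eq0_ae : \int[mu]_x h x = 0.
  have intf_fin : \int[mu]_x (f x)%:E \is a fin_num.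
    by rewrite ge0_fin_numE// integral_ge0// => x _; rewrite lee_fin.
  move: intg.
  rewrite (ae_eq_integral (fun x => h x + (f x)%:E))//; last 2 first.
  - exact: emeasurable_funD.
  - by apply: filterS ghf => x + _.
  rewrite ge0_integralD// => [|x _]; last by rewrite lee_fin.
  by move/(congr1 (fun t => t - \int[mu]_x (f x)%:E)); rewrite addeK// subee.
by move=> /(_ h0 mh); apply: filterS2 ghf => x -> ->; rewrite add0e.
Qed.

Lemma fin_num_integrable (f : X -> \bar R) : measurable_fun [set: X] f ->
  \int[mu]_x f x \is a fin_num -> mu.-integrable [set: X] f.
Proof.
move=> mf; rewrite integralE => intf_fin.
have [pos_lty neg_lty] : \int[mu]_x f^\+ x < +oo /\ \int[mu]_x f^\- x < +oo.
  have : 0 <= \int[mu]_x f^\+ x.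
    by apply: integral_ge0 => x _; exact: funepos_ge0.
  have : 0 <= \int[mu]_x f^\- x.
    by apply: integral_ge0 => x _; exact: funeneg_ge0.
  move: intf_fin; case: (\int[mu]_x f^\+ x) => [a| |];
    by case: (\int[mu]_x f^\- x) => [b| |]; rewrite ?ltry.
apply/integrableP; split => //.
rewrite (eq_integral (fun x => f^\+ x + f^\- x)); last first.
  by move=> x _; rewrite -[LHS]/((abse \o f) x) fune_abse.
rewrite ge0_integralD//; [exact: lte_add_pinfty|exact: measurable_funepos|].
exact: measurable_funeneg.
Qed.

End ae_integral.

Section ae_constant.
Context d (X : measurableType d) (R : realType)
  (mu : {measure set X -> \bar R}).

Lemma ae_cst_of_dichotomy (u : X -> R) :
  (forall c, {ae mu, forall x, u x <= c}%R \/ {ae mu, forall x, c < u x}%R) ->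
  exists c, {ae mu, forall x, u x = c}.
Proof.
move=> dich; have [mu0|mu_neq0] := eqVneq (mu setT) 0.
  by exists 0%R; exact: measure0_ae.
have aeF : ProperFilter (almost_everywhere mu).
  by apply: ae_properfilter_algebraOfSetsType; rewrite lt0e mu_neq0 measure_ge0.
pose s := ess_sup mu (EFin \o u).
have [c u_le_c] : exists c, {ae mu, forall x, u x <= c}%R.
  apply: contrapT => /forallNP u_unbounded.
  have : {ae mu, forall x, forall k : nat, k%:R < u x}%R.
    by apply: ae_foralln => k; case: (dich k%:R) => // /u_unbounded.
  move=> /filter_ex[x /(_ (Num.truncn (u x)).+1)].
  by rewrite ltNge (ltW (truncnS_gt _)).
have s_fin : s \is a fin_num.
  rewrite fin_numE; apply/andP; split.
    apply/eqP => /ess_sup_eqNyP /filter_ex[x] /=; discriminate.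
  rewrite lt_eqF// (le_lt_trans _ (ltry c))//.
  by apply/ess_supP; apply: filterS u_le_c.
exists (fine s).
have u_gt k : {ae mu, forall x, fine s - k.+1%:R^-1 < u x}%R.
  case: (dich (fine s - k.+1%:R^-1)%R) => // u_le; exfalso.
  have : s <= (fine s - k.+1%:R^-1)%:E.
    by apply/ess_supP; apply: filterS u_le => x; rewrite /= lee_fin.
  by rewrite -{1}(fineK s_fin) lee_fin leNgt gtrBl invr_gt0 ltr0n.
apply: filterS2 (ess_sup_ge mu (EFin \o u)) (ae_foralln u_gt).
move=> x u_le_s u_gt_s.
apply/eqP; rewrite eq_le -lee_fin fineK// u_le_s /=.
have : (`[fine s, +oo[%classic : set R) (u x).
  by rewrite itvcyEbigcap => k _ /=; rewrite in_itv/= andbT.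
by rewrite /= in_itv/= andbT.
Qed.

End ae_constant.

Section indicator.
Context d (X : measurableType d) (R : realType)
  (mu : {measure set X -> \bar R}).

Lemma in_L1L2_indic (N : set X) : mu setT < +oo -> measurable N ->
  in_L1L2 mu (\1_N : X -> R).
Proof.
move=> mu_fin mN; have intN_lty : \int[mu]_x (\1_N x)%:E < +oo.
  by rewrite integral_indic// setIT (le_lt_trans _ mu_fin)// le_measure// inE.
split.
  apply/integrableP; split; first exact/measurable_EFinP/measurable_indic.
  by under eq_integral do rewrite /= ger0_norm//.
have indic_sq x : (\1_N x ^+ 2 = \1_N x :> R)%R.
  by rewrite indicE; case: (_ \in _); rewrite ?expr0n ?expr1n.
by under eq_integral do rewrite indic_sq.
Qed.

Lemma ae_cst_indic (N : set X) (c : R) : measurable N ->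
  {ae mu, forall x, \1_N x = c} -> mu N = 0 \/ mu (~` N) = 0.
Proof.
move=> mN Nc; have [c1|c1] := eqVneq c 1%R; [right|left].
- apply/aeNP; first exact: measurableC.
  apply: filterS Nc => x + Nx; rewrite indicE memNset// c1 => /eqP.
  by rewrite eq_sym oner_eq0.
- apply/aeNP => //; apply: filterS Nc => x + Nx.
  by rewrite indicE mem_set// => c1E; rewrite -c1E eqxx in c1.
Qed.

End indicator.

Section absorbing.
Context d (X : measurableType d) (R : realType) (m : R.-ker X ~> X).

Definition absorbing (N : set X) := forall x, N x -> m x (~` N) = 0.

Lemma absorbing_NmD D : measurable D -> absorbing (NmD m D).
Proof.
move=> mD x /NmDE Nx; apply/aeNP; first exact/measurableC/measurable_NmD.
have : {ae m x, forall z, forall n, miter m n z D = 0}.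
  apply: ae_foralln => n; apply: ge0_integral_eq0_ae => //.
    exact: measurable_miter.
  by rewrite -miterS// Nx.
by apply: filterS => z /NmDE Nz /(_ Nz).
Qed.

Lemma laplacian_indic_eq0 N x : measurable N -> absorbing N ->
  (~ N x -> m x N = 0) -> laplacian m (\1_N : X -> R) x = 0.
Proof.
move=> mN Nabs Nx_out; apply: ae_eq0_integral.
  by apply/measurable_EFinP/measurable_funB => //; exact: measurable_indic.
have [Nx|Nx] := pselect (N x).
- apply: filterS ((aeNP _ (measurableC mN)).2 (Nabs x Nx)) => z /contrapT Nz.
  by rewrite !indicE !mem_set// subrr.
- apply: filterS ((aeNP _ mN).2 (Nx_out Nx)) => z Nz.
  by rewrite !indicE !memNset// subrr.
Qed.

End absorbing.

Section invariant_absorbing.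
Context d (X : measurableType d) (R : realType) (m : R.-pker X ~> X)
  (nu : {measure set X -> \bar R}).
Hypotheses (nu_inv : invariant_measure m nu) (nu_fin : nu setT < +oo).

Lemma invariant_absorbing_ae N : measurable N -> absorbing m N ->
  {ae nu, forall x, ~ N x -> m x N = 0}.
Proof.
move=> mN Nabs; have mN_eq1 x : N x -> m x N = 1.
  move=> Nx; rewrite -(prob_kernel (s := m) x) -(setUv N).
  rewrite -[LHS]adde0 -(Nabs x Nx).
  by rewrite measureU//; [exact: measurableC|exact: setICr].
have intN : \int[nu]_x (\1_N x)%:E = nu N by rewrite integral_indic// setIT.
have : {ae nu, forall x, m x N = (\1_N x)%:E}.
  apply: ae_eq_of_le_integral.
  - by move=> x; rewrite indicE.
  - exact: measurable_indic.
  - exact: measurable_kernel.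
  - by rewrite intN (le_lt_trans _ nu_fin)// le_measure// inE.
  - apply: aeW => x; rewrite indicE.
    have [/set_mem/mN_eq1 ->//|_] := boolP (x \in N).
    exact: measure_ge0.
  - by rewrite intN -nu_inv.
by apply: filterS => x -> Nx; rewrite indicE memNset.
Qed.

Lemma ergodic_m_connected : ergodic_laplacian m nu -> m_connected m nu.
Proof.
move=> erg D mD nuD_gt0 _; pose N := NmD m D.
have mN : measurable N := measurable_NmD m mD.
have Nabs : absorbing m N := absorbing_NmD mD.
have harmonic_N : {ae nu, forall x, laplacian m (\1_N : X -> R) x = 0}.
  apply: filterS (invariant_absorbing_ae mN Nabs) => x.
  exact: laplacian_indic_eq0.
have [c Nc] := erg _ (in_L1L2_indic nu_fin mN) harmonic_N.
have [//|nuNC0] := ae_cst_indic mN Nc.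
suff nuD0 : nu D = 0 by rewrite nuD0 ltxx in nuD_gt0.
rewrite nu_inv//; apply: ae_eq0_integral; first exact: measurable_kernel.
apply: filterS ((aeNP _ (measurableC mN)).2 nuNC0) => x /contrapT.
by move/NmDE/(_ 0%N).
Qed.

End invariant_absorbing.

Section invariant_ae.
Context d (X : measurableType d) (R : realType) (m : R.-ker X ~> X)
  (nu : {measure set X -> \bar R}).
Hypothesis nu_inv : invariant_measure m nu.

Lemma invariant_kernel_ae (P : X -> Prop) :
  {ae nu, forall x, P x} -> {ae nu, forall x, {ae m x, forall z, P z}}.
Proof.
move=> [N [mN nuN0 notPN]].
have : {ae nu, forall x, m x N = 0}.
  apply: ge0_integral_eq0_ae => //; first exact: measurable_kernel.
  by rewrite -nu_inv.
by apply: filterS => x mxN0; exists N.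
Qed.

Lemma ae_NmD_of_exit_null D : measurable D ->
  {ae nu, forall x, ~ D x -> m x D = 0} ->
  {ae nu, forall x, ~ D x -> NmD m D x}.
Proof.
move=> mD D_exit.
suff : forall n, {ae nu, forall x, ~ D x -> miter m n x D = 0}.
  move/ae_foralln; apply: filterS => x Nx Dx.
  by apply/NmDE => n; exact: Nx n Dx.
elim=> [//|n IHn].
apply: filterS2 D_exit (invariant_kernel_ae IHn) => x + IHx Dx.
move=> /(_ Dx) /(aeNP _ mD) Dx_exit; rewrite miterS//.
apply: ae_eq0_integral; first exact: measurable_miter.
by apply: filterS2 Dx_exit IHx => z Dz; exact.
Qed.

End invariant_ae.

Section harmonic.
Context d (X : measurableType d) (R : realType) (m : R.-pker X ~> X).

Lemma integrable_pker_cst x (c : R) : (m x).-integrable [set: X] (cst c%:E).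
Proof.
apply/integrableP; split => //.
by rewrite integral_cst// prob_kernel mule1 ltry.
Qed.

Lemma laplacian_eq0_funrpos (u : X -> R) x c : measurable_fun [set: X] u ->
  laplacian m u x = 0 ->
  ((u \- cst c)^\+ x)%:E <= \int[m x]_y ((u \- cst c)^\+ y)%:E.
Proof.
move=> mu Lu; pose g := (u \- cst c)%R.
have {}Lu : \int[m x]_y (u y - u x)%:E = 0 := Lu.
have iu : (m x).-integrable [set: X] (fun y => (u y - u x)%:E).
  apply: fin_num_integrable; last by rewrite Lu.
  exact/measurable_EFinP/measurable_funB.
have g_split : EFin \o g = (fun y => (u y - u x)%:E + (u x - c)%:E).
  by apply/funext => y; rewrite -EFinD subrKA.
have ig : (m x).-integrable [set: X] (EFin \o g).
  by rewrite g_split; apply: integrableD => //; exact: integrable_pker_cst.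
have intg : \int[m x]_y (EFin \o g) y = (g x)%:E.
  rewrite g_split integralD//; last exact: integrable_pker_cst.
  by rewrite Lu add0e integral_cst// prob_kernel mule1.
rewrite /funrpos EFin_max ge_max integral_ge0 ?andbT; last first.
  by move=> y _; rewrite lee_fin le_max lexx orbT.
rewrite -/(g x) -intg; apply: le_integral => //.
- by have := integrable_funepos measurableT ig; rewrite funerpos.
- by move=> y _; rewrite lee_fin le_max lexx.
Qed.

End harmonic.

Lemma measurable_gtr d (X : measurableType d) (R : realType) (u : X -> R) c :
  measurable_fun [set: X] u -> measurable [set x | c < u x]%R.
Proof.
move=> mu; have := mu measurableT _ (measurable_itv `]c, +oo[); rewrite setTI.
by congr measurable; apply/seteqP; split => y /=; rewrite in_itv/= andbT.
Qed.

Section harmonic_invariant.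
Context d (X : measurableType d) (R : realType) (m : R.-pker X ~> X)
  (nu : {measure set X -> \bar R}).
Hypotheses (nu_inv : invariant_measure m nu) (nu_fin : nu setT < +oo).

Lemma harmonic_superlevel_null (u : X -> R) c :
  nu.-integrable [set: X] (EFin \o u) ->
  {ae nu, forall x, laplacian m u x = 0} ->
  {ae nu, forall x, u x <= c -> m x [set y | c < u y] = 0}%R.
Proof.
move=> iu Lu; have /integrableP[/measurable_EFinP mu _] := iu.
pose g := (u \- cst c)^\+%R.
have mg : measurable_fun [set: X] g.
  by apply: measurable_funrpos; exact: measurable_funB.
have intg_lty : \int[nu]_x (g x)%:E < +oo.
  have ic : nu.-integrable [set: X] (fun=> c%:E).
    by apply/integrableP; split => //; rewrite integral_cst// lte_mul_pinfty.
  have /integrableP[_] :=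
    integrable_funepos measurableT (integrableB measurableT iu ic).
  congr (_ < _); apply: eq_integral => x _.
  by rewrite gee0_abs ?funepos_ge0// funeposE/= -EFinB -EFin_max.
have Eg0 y : 0 <= (g y)%:E by rewrite lee_fin; exact: funrpos_ge0.
have mEg : measurable_fun [set: X] (fun y => (g y)%:E).
  exact/measurable_EFinP.
have G_eq_g : {ae nu, forall x, \int[m x]_y (g y)%:E = (g x)%:E}.
  apply: ae_eq_of_le_integral => //.
  - by apply: (measurable_fun_integral_kernel (measurable_kernel m)).
  - by apply: filterS Lu => x; exact: laplacian_eq0_funrpos.
  - by rewrite -invariant_integral.
apply: filterS G_eq_g => x Gx ux_le_c.
have gx0 : g x = 0%R by rewrite /g /funrpos/= max_r// subr_le0.
have /ge0_integral_eq0_ae : \int[m x]_y (g y)%:E = 0 by rewrite Gx gx0.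
move=> /(_ Eg0 mEg) g_ae0.
apply/aeNP; first exact: measurable_gtr.
apply: filterS g_ae0 => y [] /= + cuy; rewrite /g /funrpos/= max_l; last first.
  by rewrite subr_ge0 ltW.
by move/eqP; rewrite subr_eq0 => /eqP uyc; rewrite uyc ltxx in cuy.
Qed.

Lemma m_connected_ergodic : m_connected m nu -> ergodic_laplacian m nu.
Proof.
move=> conn u [iu _] Lu; have /integrableP[/measurable_EFinP mu _] := iu.
apply: ae_cst_of_dichotomy => c; pose D := [set y | c < u y]%R.
have mD : measurable D := measurable_gtr c mu.
have [nuD0|nuD_neq0] := eqVneq (nu D) 0; [left|right].
  by apply: filterS ((aeNP _ mD).2 nuD0) => x /negP; rewrite -leNgt.
have nuN0 : nu (NmD m D) = 0.
  apply: conn => //; first by rewrite lt0e nuD_neq0 measure_ge0.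
  by rewrite (le_lt_trans _ nu_fin)// le_measure// inE.
have DC_in_N : {ae nu, forall x, ~ D x -> NmD m D x}.
  apply: ae_NmD_of_exit_null => //.
  apply: filterS (harmonic_superlevel_null c iu Lu) => x + /negP.
  by rewrite -leNgt => /[apply].
have N_null := (aeNP _ (measurable_NmD m mD)).2 nuN0.
apply: filterS2 DC_in_N N_null => x DN notN.
by apply: contrapT => /DN.
Qed.

End harmonic_invariant.

Theorem theorem2p21 (R : realType) (d : measure_display) (X : measurableType d)
  (dist : X -> X -> R) (m : R.-pker X ~> X) (nu : {measure set X -> \bar R}) :
  metric_random_walk_space dist m ->
  invariant_measure m nu ->
  (nu setT < +oo)%E ->
  (ergodic_laplacian m nu <-> m_connected m nu).
Proof.
move=> _ nu_inv nu_fin; split.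
- exact: ergodic_m_connected.
- exact: m_connected_ergodic.
Qed.
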